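(* Let $\mathbb D$ be any nonempty set of database instances over the same schema. Then there exists a probabilistic database $\mathcal D\in\mathsf{FO}(\mathsf{TI})$ with $\mathrm{worlds}(\mathcal D)=\mathbb D$.
   Context: Fix a countably infinite universe $U$. A database schema is a finite nonempty set of relation symbols with arities; facts are $R(u_1,\dots,u_{\mathrm{ar}(R)})$ with $u_i\in U$; an instance is a finite set of facts; $\mathrm{adom}(D)$ is the set of elements of $U$ occurring in $D$. A probabilistic database (PDB) is a discrete probability space $(\mathbb D,P)$ with $\mathbb D$ a nonempty countable set of instances; $\mathrm{worlds}(\mathcal D)$ is the set of instances $D$ with $P(\{D\})>0$. A PDB $\mathcal I$ is tuple-independent if for all pairwise distinct facts $f_1,\dots,f_k$, $\Pr(f_1\in I,\dots,f_k\in I)=\prod_i\Pr(f_i\in I)$. An FO-view consists of one first-order formula $\Phi_R(x_1,\dots,x_{\mathrm{ar}(R)})$ per output relation symbol $R$, evaluated under active domain semantics (quantifiers range over $\mathrm{adom}(D)$ and the formula's constants), mapping $D$ to the instance containing $R(\bar a)$ for all $\bar a$ over $\mathrm{adom}(D)\cup\mathrm{adom}(\Phi_R)$ with $D\models\Phi_R[\bar a]$. The image of a PDB $(\mathbb D,P)$ under a view $V$ is the PDB on $V(\mathbb D)$ with $P'(\{D'\})=P(\{D:V(D)=D'\})$. $\mathsf{FO}(\mathsf{TI})$ is the class of images of tuple-independent PDBs under FO-views. *)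

From HB Require Import structures.
From mathcomp Require Import all_boot all_order all_algebra finmap.
From mathcomp Require Import boolp classical_sets functions cardinality reals ereal esum.
From mathcomp Require Import Rstruct.

Set Implicit Arguments.
Unset Strict Implicit.
Unset Printing Implicit Defensive.

Import Order.TTheory GRing.Theory Num.Theory.

Definition U := nat.

Record schema := Schema {
  sym : finType;
  ar : sym -> nat;
  sym_nonempty : (0 < #|sym|)%N }.

Definition fact (s : schema) : Type := {R : sym s & (ar R).-tuple U}.
HB.instance Definition _ (s : schema) := Choice.on (fact s).

Definition inst (s : schema) : Type := {fset fact s}.
HB.instance Definition _ (s : schema) := Choice.on (inst s).

Definition adom (s : schema) (D : inst s) : set U :=
  [set u | exists2 f : fact s, f \in D & u \in (tagged f : seq U)].

Inductive term := TVar of nat | TCst of U.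

Inductive formula (s : schema) :=
| FTrue
| FFalse
| FRel (R : sym s) of (ar R).-tuple term
| FEq of term & term
| FNot of formula s
| FAnd of formula s & formula s
| FOr of formula s & formula s
| FImp of formula s & formula s
| FExists of nat & formula s
| FForall of nat & formula s.

Definition term_csts (t : term) : seq U :=
  if t is TCst c then [:: c] else [::].

Definition term_vars (t : term) : seq nat :=
  if t is TVar x then [:: x] else [::].

Fixpoint fcsts (s : schema) (phi : formula s) : seq U :=
  match phi with
  | FTrue | FFalse => [::]
  | FRel _ ts => flatten (map term_csts ts)
  | FEq t1 t2 => term_csts t1 ++ term_csts t2
  | FNot p => fcsts p
  | FAnd p q | FOr p q | FImp p q => fcsts p ++ fcsts q
  | FExists _ p | FForall _ p => fcsts p
  end.

Fixpoint ffree (s : schema) (phi : formula s) : seq nat :=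
  match phi with
  | FTrue | FFalse => [::]
  | FRel _ ts => flatten (map term_vars ts)
  | FEq t1 t2 => term_vars t1 ++ term_vars t2
  | FNot p => ffree p
  | FAnd p q | FOr p q | FImp p q => ffree p ++ ffree q
  | FExists x p | FForall x p => seq.filter (fun y => y != x) (ffree p)
  end.

Definition teval (nu : nat -> U) (t : term) : U :=
  match t with TVar x => nu x | TCst c => c end.

Definition upd (nu : nat -> U) (x : nat) (u : U) : nat -> U :=
  fun y => if y == x then u else nu y.

Fixpoint sat (s : schema) (D : inst s) (dom : set U) (nu : nat -> U)
    (phi : formula s) : Prop :=
  match phi with
  | FTrue => True
  | FFalse => False
  | FRel R ts => (Tagged (fun R => (ar R).-tuple U) (map_tuple (teval nu) ts)
                  : fact s) \in D
  | FEq t1 t2 => teval nu t1 = teval nu t2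
  | FNot p => ~ sat D dom nu p
  | FAnd p q => sat D dom nu p /\ sat D dom nu q
  | FOr p q => sat D dom nu p \/ sat D dom nu q
  | FImp p q => sat D dom nu p -> sat D dom nu q
  | FExists x p => exists2 u, dom u & sat D dom (upd nu x u) p
  | FForall x p => forall u, dom u -> sat D dom (upd nu x u) p
  end.

(* Active-domain semantics: quantifiers range over adom(D) u adom(Phi). *)
Definition adom_dom (s : schema) (D : inst s) (phi : formula s) : set U :=
  adom D `|` [set u | u \in fcsts phi].

(* Assignment x_i |-> a_i  (the free variables x_1..x_k are 0..k-1). *)
Definition tuple_asg (k : nat) (a : k.-tuple U) : nat -> U :=
  fun i => nth 0%N (a : seq U) i.

Definition models (s : schema) (D : inst s) (phi : formula s) (k : nat)
    (a : k.-tuple U) : Prop :=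
  sat D (adom_dom D phi) (tuple_asg a) phi.

Record view (s t : schema) := View {
  vformula : sym t -> formula s;
  vfree : forall R : sym t, all (fun x => (x < ar R)%N) (ffree (vformula R)) }.

Definition view_eval (s t : schema) (V : view s t) (D : inst s) (D' : inst t)
  : Prop :=
  forall f : fact t,
    f \in D' <->
    ((forall u, u \in (tagged f : seq U) -> adom_dom D (vformula V (tag f)) u)
     /\ models D (vformula V (tag f)) (tagged f)).

Local Open Scope ring_scope.
Local Open Scope classical_set_scope.

Record pdb (s : schema) := PDB {
  space : set (inst s);
  mass : inst s -> Rdefinitions.R;
  space_nonempty : space !=set0;
  mass_ge0 : forall D, 0 <= mass D;
  mass_out : forall D, ~ space D -> mass D = 0;
  mass_sum : (\esum_(D in space) (mass D)%:E = 1)%E }.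

Definition Prob (s : schema) (P : pdb s) (A : set (inst s)) : \bar Rdefinitions.R :=
  \esum_(D in A `&` space P) (mass P D)%:E.

Definition worlds (s : schema) (P : pdb s) : set (inst s) :=
  [set D | (0 < Prob P [set D])%E].

Definition tuple_independent (s : schema) (P : pdb s) : Prop :=
  forall fs : seq (fact s), uniq fs ->
    Prob P [set I | forall f, f \in fs -> f \in I]
    = (\prod_(f <- fs) Prob P [set I | f \in I])%E.

Definition is_image (s t : schema) (P : pdb s) (V : view s t) (Q : pdb t)
  : Prop :=
  space Q = [set D' | exists2 D, space P D & view_eval V D D'] /\
  forall D', Prob Q [set D'] = Prob P [set D | view_eval V D D'].

Definition in_FO_TI (t : schema) (Q : pdb t) : Prop :=
  exists (s : schema) (P : pdb s) (V : view s t),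
    tuple_independent P /\ is_image P V Q.

(* Encode every instance [D] of the target schema as a "chain" of facts of a single
   source relation: node [j] of the chain of [D] records a code [c] of [D], its own id,
   the id of its successor, and (for [j > 0]) the [j]-th fact of [D]. The
   tuple-independent source gives each chain node of an instance in [DD] a positive
   probability, decreasing fast enough in a code of the node for the product measure to
   be normalizable, and every other fact probability 0. The FO view tests whether the
   random instance contains exactly one chain that has a head and is closed under
   successors; such a chain is necessarily complete, so the view can output the facts
   it encodes. Otherwise the view outputs a fixed [D0] in [DD], written into the
   formulas as constants. Hence every world of the image lies in [DD], and each [D] in
   [DD] is the image of the instance consisting of exactly its chain. *)

From Pilot Require Import Defs.
From HB Require Import structures.
From mathcomp Require Import all_boot all_order all_algebra finmap.
From mathcomp Require Import boolp classical_sets functions cardinality reals ereal esum fsbigop.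
From mathcomp Require Import Rstruct lra zify.
Import Order.TTheory GRing.Theory Num.Theory.
Local Open Scope ring_scope.
Local Open Scope classical_set_scope.
Set Implicit Arguments.
Unset Strict Implicit.
Unset Printing Implicit Defensive.

Local Notation real := Rdefinitions.R.

Section ESumComplements.
Variables (R : realType) (T : choiceType).
Implicit Types (S : set T) (f : T -> \bar R).

Lemma ge0_fsbigZl S (c : R) f : finite_set S -> (forall x, S x -> (0 <= f x)%E) ->
  (\sum_(x \in S) (c%:E * f x) = c%:E * \sum_(x \in S) f x)%E.
Proof.
move=> finS f0; rewrite !fsbig_finite // !big_seq ge0_sume_distrr // => x.
by rewrite in_fset_set // inE => /f0.
Qed.

Lemma ge0_esumZl S (c : R) f : 0 <= c -> (forall x, S x -> (0 <= f x)%E) ->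
  (\esum_(x in S) (c%:E * f x) = c%:E * \esum_(x in S) f x)%E.
Proof.
move=> c0 f0; rewrite /esum -ereal_supZl //; last first.
  by apply/set0P; exists 0%E; exists set0; [exact: fsets_set0|rewrite fsbig_set0].
congr ereal_sup; apply/seteqP; split => y /=.
  move=> [X [finX XS] <-]; exists (\sum_(i \in X) f i)%R; first by exists X.
  by rewrite ge0_fsbigZl // => i /XS /f0.
move=> [z [X [finX XS] <-] <-]; exists X => //.
by rewrite ge0_fsbigZl // => i /XS /f0.
Qed.

Lemma le_term_esum S f x : S x -> (0 <= f x)%E -> (f x <= \esum_(i in S) f i)%E.
Proof.
move=> Sx f0; apply: esum_ge; exists [set x]; last by rewrite fsbig_set1.
by split; [exact: finite_set1|move=> y /= ->].
Qed.

Lemma esum_setI_supp S S' f : (forall x, ~ S' x -> f x = 0%E) ->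
  (\esum_(x in S `&` S') f x = \esum_(x in S) f x)%E.
Proof.
move=> f0; rewrite esum_mkcondr; apply: eq_esum => x _.
by case: ifPn => // /negP xS'; rewrite f0 // => /mem_set.
Qed.

End ESumComplements.

Section HalfPowers.
Variable R : realFieldType.

Lemma prod_halfpow_iota_le n :
  \prod_(0 <= k < n) (1 + 2^-1 ^+ k.+2) <= 2 - 2^-1 ^+ n :> R.
Proof.
elim: n => [|n IH]; first by rewrite big_geq // expr0; lra.
rewrite big_nat_recr //=; apply: le_trans (ler_wpM2r _ IH) _.
  by rewrite addr_ge0 // exprn_ge0 // invr_ge0.
rewrite !exprS; set x := 2^-1 ^+ n.
have x0 : 0 <= x by rewrite exprn_ge0 // invr_ge0.
have -> : (2 : R)^-1 = 1 / 2 by rewrite div1r.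
nra.
Qed.

Lemma prod_halfpow_le ks : uniq ks -> \prod_(k <- ks) (1 + 2^-1 ^+ k.+2) <= 2 :> R.
Proof.
move=> uks; set F := fun k => 1 + 2^-1 ^+ k.+2 : R.
have F1 k : 1 <= F k by rewrite lerDl exprn_ge0 // invr_ge0.
pose n := (\max_(k <- ks) k).+1.
apply: le_trans (le_trans (prod_halfpow_iota_le n) _); last first.
  by rewrite lerBlDr lerDl exprn_ge0 // invr_ge0.
rewrite [X in _ <= X](bigID (fun k => k \in ks)) /= -[X in _ <= X * _]big_filter.
have ks_perm : perm_eq [seq k <- index_iota 0 n | k \in ks] ks.
  apply: uniq_perm; rewrite ?filter_uniq ?iota_uniq // => k.
  rewrite mem_filter mem_index_iota andb_idr // => kks; rewrite ltnS.
  exact: leq_bigmax_seq.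
rewrite (perm_big _ ks_perm) -[X in X <= _]mulr1 ler_wpM2l //.
  by apply: prodr_ge0 => k _; apply: le_trans (F1 k).
by apply: (big_ind (fun x => 1 <= x)) => [//|x y|k _]; [exact: mulr_ege1|exact: F1].
Qed.

End HalfPowers.

Section ProductPDB.
Variables (s : schema) (r : fact s -> real).
Hypothesis r_ge0 : forall f, 0 <= r f.

Definition weight (I : inst s) : real := \prod_(f <- I) r f.

Local Notation eweight I := (weight I)%:E.

Lemma weight_ge0 I : 0 <= weight I.
Proof. exact: prodr_ge0. Qed.

Lemma eweight_ge0 I : (0 <= eweight I)%E.
Proof. by rewrite lee_fin weight_ge0. Qed.

Lemma weight0 : weight fset0 = 1.
Proof. exact: big_seq_fset0. Qed.

Lemma weightU1 a I : a \notin I -> weight (a |` I)%fset = r a * weight I.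
Proof. exact: big_fsetU1. Qed.

Definition containing (fs : seq (fact s)) : set (inst s) :=
  [set I | forall f, f \in fs -> f \in I].

Definition within (bs : seq (fact s)) : set (inst s) :=
  [set I | forall f, f \in I -> f \in bs].

(* Adding [a] is a bijection from the instances of [S] without [a] onto
   those with [a], and it multiplies the weight by [r a]. *)
Lemma esum_weight_mem (S : set (inst s)) a :
    (forall I, a \notin I -> S I <-> S (a |` I)%fset) ->
  (\esum_(I in S `&` [set I | a \in I]) eweight I =
   (r a)%:E * \esum_(I in S `&` ~` [set I | a \in I]) eweight I)%E.
Proof.
move=> S_a; rewrite -ge0_esumZl // => [|I _]; last exact: eweight_ge0.
have -> : S `&` [set I | a \in I] =
    (fun I => a |` I)%fset @` (S `&` ~` [set I | a \in I]).
  apply/seteqP; split => I /=.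
    move=> [SI aI]; have aD : a \notin (I `\ a)%fset by rewrite !inE eqxx.
    exists (I `\ a)%fset; last by rewrite fsetD1K.
    by split; [apply/(S_a _ aD); rewrite fsetD1K|exact/negP].
  by move=> [J [SJ /negP aJ] <-]; split; [exact/(S_a _ aJ)|exact: fset1U1].
rewrite esum_image; last first.
  move=> I J; rewrite !inE => -[_ /negP aI] [_ /negP aJ].
  by move=> /(congr1 (fun K => K `\ a)%fset); rewrite !fsetU1K.
by apply: eq_esum => I [_ /negP aI]; rewrite weightU1 // EFinM.
Qed.

Lemma esum_weight_containing fs : uniq fs ->
  (\esum_(I in containing fs) eweight I =
   (\prod_(f <- fs) (r f / (1 + r f)))%:E * \esum_(I in setT) eweight I)%E.
Proof.
elim: fs => [_|a fs IH /andP[afs /IH {}IH]].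
  by rewrite big_nil mul1e; congr esum; apply/seteqP; split.
have containing_a I : a \notin I -> containing fs I <-> containing fs (a |` I)%fset.
  move=> aI; split => H f ffs; first exact/fset1Ur/H.
  by move: (H f ffs); rewrite in_fset1U => /orP[/eqP fa|//]; rewrite -fa ffs in afs.
have -> : containing (a :: fs) = containing fs `&` [set I | a \in I].
  apply/seteqP; split => I /=; last by move=> [H aI] f; rewrite inE => /orP[/eqP ->|/H].
  by move=> H; split => [f ffs|]; apply: H; rewrite inE ?ffs ?orbT ?eqxx.
rewrite esum_weight_mem //.
have := esumID [set I : inst s | a \in I] (containing fs) _ (fun I _ => eweight_ge0 I).
rewrite esum_weight_mem // IH big_cons (EFinM (r a / (1 + r a))) -muleA => ->.
set X := (\esum_(_ in _) _)%E.
have X0 : (0 <= X)%E by apply: esum_ge0 => I _; exact: eweight_ge0.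
have ra1 : 1 + r a != 0 by rewrite gt_eqF // ltr_pwDl.
rewrite -[X in (_ + X)%E]mul1e -ge0_muleDl ?lee_fin // muleA -EFinM.
by rewrite [r a + 1]addrC divfK.
Qed.

Lemma esum_weight_within bs : uniq bs ->
  (\esum_(I in within bs) eweight I = (\prod_(b <- bs) (1 + r b))%:E)%E.
Proof.
elim: bs => [_|a bs IH /andP[abs /IH {}IH]].
  have -> : within [::] = [set fset0].
    apply/seteqP; split => [I /= I0|_ -> //]; apply/fsetP => f.
    by rewrite inE; apply/negP => /I0.
  by rewrite esum_set1 ?eweight_ge0 // weight0 big_nil.
have within_a I : a \notin I -> within (a :: bs) I <-> within (a :: bs) (a |` I)%fset.
  move=> aI; split => [H f|H f fI]; last exact/H/fset1Ur.
  by rewrite in_fset1U => /orP[/eqP ->|/H //]; rewrite inE eqxx.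
rewrite (esumID [set I : inst s | a \in I]) => [|I _]; last exact: eweight_ge0.
rewrite esum_weight_mem //.
have -> : within (a :: bs) `&` ~` [set I | a \in I] = within bs.
  apply/seteqP; split => I /=.
    move=> [H /negP aI] f fI; move: (H f fI); rewrite inE => /orP[/eqP fa|//].
    by rewrite -fa fI in aI.
  move=> H; split => [f /H|/H]; first by rewrite inE => ->; rewrite orbT.
  by rewrite (negPf abs).
rewrite IH big_cons -EFinM -[X in (_ + X)%E]mul1e.
by rewrite -EFinM -EFinD -mulrDl addrC.
Qed.

Lemma esum_weight_le C :
    (forall bs, uniq bs -> \prod_(b <- bs) (1 + r b) <= C) ->
  (\esum_(I in setT) eweight I <= C%:E)%E.
Proof.
move=> prod_le; apply: ge_ereal_sup => _ [X [finX _] <-].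
pose bs := enum_fset (\bigcup_(J <- fset_set X) J)%fset.
apply: (@le_trans _ _ (\esum_(I in within bs) eweight I)%E).
  apply: ereal_sup_ubound; exists X => //; split => // J XJ f fJ.
  by apply/bigfcupP; exists J; rewrite // andbT in_fset_set // inE.
by rewrite esum_weight_within ?fset_uniq // lee_fin prod_le ?fset_uniq.
Qed.

Variable C : real.
Hypothesis prod_le : forall bs, uniq bs -> \prod_(b <- bs) (1 + r b) <= C.

Let Z := (\esum_(I in setT) eweight I)%E.

Lemma Z_ge1 : (1 <= Z)%E.
Proof.
have := le_term_esum (S := setT) (f := fun J => eweight J) I (eweight_ge0 fset0).
by rewrite weight0.
Qed.

Lemma Z_fin_num : Z \is a fin_num.
Proof.
rewrite ge0_fin_numE; last exact: le_trans Z_ge1.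
exact: le_lt_trans (esum_weight_le prod_le) (ltry _).
Qed.

Definition normalizer : real := fine Z.

Lemma normalizerE : normalizer%:E = Z.
Proof. exact: fineK Z_fin_num. Qed.

Lemma normalizer_gt0 : 0 < normalizer.
Proof. by rewrite -lte_fin normalizerE; exact: lt_le_trans Z_ge1. Qed.

Definition positive_weight : set (inst s) := [set I | 0 < weight I].

Definition product_mass (I : inst s) : real := weight I / normalizer.

Lemma product_mass_ge0 I : 0 <= product_mass I.
Proof. by rewrite divr_ge0 ?weight_ge0 ?ltW ?normalizer_gt0. Qed.

Lemma product_mass_out I : ~ (0 < weight I) -> product_mass I = 0.
Proof.
move=> /negP; rewrite lt_def weight_ge0 andbT negbK => /eqP w0.
by rewrite /product_mass w0 mul0r.
Qed.

Lemma esum_product_mass (A : set (inst s)) :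
  (\esum_(I in A `&` positive_weight) (product_mass I)%:E =
   (normalizer^-1)%:E * \esum_(I in A) eweight I)%E.
Proof.
rewrite esum_setI_supp => [|I /product_mass_out -> //].
rewrite -ge0_esumZl ?invr_ge0 ?ltW ?normalizer_gt0 // => [|I _]; last exact: eweight_ge0.
by apply: eq_esum => I _; rewrite -EFinM mulrC.
Qed.

Lemma product_mass_sum :
  (\esum_(I in positive_weight) (product_mass I)%:E = 1)%E.
Proof.
rewrite -[X in esum X]setTI esum_product_mass -/Z -normalizerE -EFinM mulVf //.
by rewrite gt_eqF ?normalizer_gt0.
Qed.

Lemma positive_weight_nonempty : positive_weight !=set0.
Proof. by exists fset0; rewrite /positive_weight /= weight0. Qed.

Definition product_pdb : pdb s :=
  PDB positive_weight_nonempty product_mass_ge0 product_mass_out product_mass_sum.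

Lemma Prob_product_pdb (A : set (inst s)) :
  Prob product_pdb A = ((normalizer^-1)%:E * \esum_(I in A) eweight I)%E.
Proof. exact: esum_product_mass. Qed.

Lemma Prob_product_pdb_gt0 (A : set (inst s)) I :
  A I -> 0 < weight I -> (0 < Prob product_pdb A)%E.
Proof.
move=> AI wI; rewrite Prob_product_pdb mule_gt0 ?lte_fin ?invr_gt0 ?normalizer_gt0 //.
by apply: lt_le_trans (le_term_esum AI (eweight_ge0 I)); rewrite lte_fin.
Qed.

Lemma product_pdb_TI : tuple_independent product_pdb.
Proof.
have Prob_containing fs : uniq fs ->
    Prob product_pdb (containing fs) = (\prod_(f <- fs) (r f / (1 + r f)))%:E.
  move=> ufs; rewrite Prob_product_pdb esum_weight_containing // -/Z -normalizerE.
  by rewrite muleCA -EFinM mulVf ?mulr1 // gt_eqF ?normalizer_gt0.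
move=> fs ufs; rewrite Prob_containing // -prodEFin; apply: eq_big_seq => f _.
have -> : [set I | f \in I] = containing [:: f].
  apply/seteqP; split => I /=; first by move=> fI g; rewrite inE => /eqP ->.
  by apply; rewrite inE.
by rewrite Prob_containing // big_seq1.
Qed.

End ProductPDB.

Section PDBFacts.
Variables (s : schema) (P : pdb s).

Lemma Prob_ge0 A : (0 <= Prob P A)%E.
Proof. by apply: esum_ge0 => D _; rewrite lee_fin mass_ge0. Qed.

Lemma Prob_le1 A : (Prob P A <= 1)%E.
Proof.
rewrite -(mass_sum P) /Prob esum_mkcond [leRHS]esum_mkcond.
apply: le_esum => D _; rewrite in_setI.
by case: (D \in A); case: (D \in Defs.space P) => //=; rewrite lee_fin mass_ge0.
Qed.

Lemma Prob_fin_num A : Prob P A \is a fin_num.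
Proof. by rewrite ge0_fin_numE ?Prob_ge0 // (le_lt_trans (Prob_le1 A)) ?ltry. Qed.

Lemma Prob_disjoint A : (forall D, A D -> ~ Defs.space P D) -> Prob P A = 0%E.
Proof.
move=> AP; rewrite /Prob (_ : _ `&` _ = set0) ?esum_set0 //.
by apply/seteqP; split => D // [/AP].
Qed.

Lemma Prob_gt0_inhabited A : (0 < Prob P A)%E -> exists2 D, A D & Defs.space P D.
Proof.
move=> PA; apply: contrapT => noD; move: PA; rewrite Prob_disjoint ?ltxx //.
by move=> D AD PD; apply: noD; exists D.
Qed.

End PDBFacts.

Lemma view_eval_functional (s t : schema) (V : view s t) I D1 D2 :
  view_eval V I D1 -> view_eval V I D2 -> D1 = D2.
Proof.
by move=> VD1 VD2; apply/fsetP => f; apply/idP/idP => [/VD1/VD2|/VD2/VD1].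
Qed.

Section ImagePDB.
Variables (s t : schema) (P : pdb s) (V : view s t).
Hypothesis view_total : forall I, Defs.space P I -> exists D', view_eval V I D'.

Definition image_space : set (inst t) :=
  [set D' | exists2 I, Defs.space P I & view_eval V I D'].

Definition image_mass (D' : inst t) : real :=
  fine (Prob P [set I | view_eval V I D']).

Lemma image_space_nonempty : image_space !=set0.
Proof.
have [I PI] := space_nonempty P; have [D' VD'] := view_total PI.
by exists D', I.
Qed.

Lemma image_mass_ge0 D' : 0 <= image_mass D'.
Proof. exact/fine_ge0/Prob_ge0. Qed.

Lemma Prob_image_out D' : ~ image_space D' -> Prob P [set I | view_eval V I D'] = 0%E.
Proof. by move=> D'out; apply: Prob_disjoint => I VD' PI; apply: D'out; exists I. Qed.

Lemma image_mass_out D' : ~ image_space D' -> image_mass D' = 0.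
Proof. by move=> /Prob_image_out; rewrite /image_mass => ->. Qed.

Definition view_image (I : inst s) : inst t := xget fset0 [set D' | view_eval V I D'].

Lemma view_imageP I : Defs.space P I -> view_eval V I (view_image I).
Proof. by move=> /view_total VI; exact: xgetPex VI. Qed.

(* Reindex the double sum over the pairs [(V(I), I)] by [I]. *)
Lemma image_mass_sum : (\esum_(D' in image_space) (image_mass D')%:E = 1)%E.
Proof.
transitivity (\esum_(D' in image_space)
    \esum_(I in [set I | view_eval V I D'] `&` Defs.space P) (mass P I)%:E)%E.
  by apply: eq_esum => D' _; rewrite /image_mass fineK ?Prob_fin_num.
rewrite esum_esum => [|D' I _ _]; last by rewrite lee_fin mass_ge0.
rewrite (reindex_esum (Defs.space P) _ (fun I => (view_image I, I))); first exact: mass_sum.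
split.
- move=> I PI /=; split => /=; first by exists I => //; exact: view_imageP.
  by split => //; exact: view_imageP.
- by move=> I J _ _ [].
- move=> [D' I] [/= _ [VD' PI]]; exists I => //=.
  by rewrite (view_eval_functional (view_imageP PI) VD').
Qed.

Definition image_pdb : pdb t :=
  PDB image_space_nonempty image_mass_ge0 image_mass_out image_mass_sum.

Lemma image_pdbP : is_image P V image_pdb.
Proof.
split => // D'; rewrite /Prob /=.
have [D'in|D'out] := pselect (image_space D').
  rewrite (_ : _ `&` _ = [set D']); last by apply/seteqP; split => x /= => [[]|->].
  by rewrite esum_set1 ?lee_fin ?image_mass_ge0 // /image_mass fineK ?Prob_fin_num.
rewrite (_ : _ `&` _ = set0); last by apply/seteqP; split => x //= [->].
by rewrite esum_set0 -(Prob_image_out D'out).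
Qed.

End ImagePDB.

Local Close Scope ring_scope.
Local Open Scope nat_scope.

Section DerivedConnectives.
Variable s : schema.
Implicit Types (I : inst s) (dom : set U) (nu : nat -> U) (phi : formula s).

Fixpoint exists_vars (xs : seq nat) phi : formula s :=
  if xs is x :: xs' then FExists x (exists_vars xs' phi) else phi.

Fixpoint forall_vars (xs : seq nat) phi : formula s :=
  if xs is x :: xs' then FForall x (forall_vars xs' phi) else phi.

Fixpoint upd_list nu (xs : seq nat) (us : seq U) : nat -> U :=
  if (xs, us) is (x :: xs', u :: us') then upd_list (upd nu x u) xs' us' else nu.

Definition big_and (phis : seq (formula s)) : formula s := foldr (@FAnd s) (FTrue s) phis.

Definition big_or (phis : seq (formula s)) : formula s := foldr (@FOr s) (FFalse s) phis.

(* Rewrite rules, since [/=] would also unfold the formula abbreviations below. *)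
Lemma sat_FNot I dom nu phi : sat I dom nu (FNot phi) <-> ~ sat I dom nu phi.
Proof. by []. Qed.

Lemma sat_FAnd I dom nu phi psi :
  sat I dom nu (FAnd phi psi) <-> sat I dom nu phi /\ sat I dom nu psi.
Proof. by []. Qed.

Lemma sat_FOr I dom nu phi psi :
  sat I dom nu (FOr phi psi) <-> sat I dom nu phi \/ sat I dom nu psi.
Proof. by []. Qed.

Lemma sat_FImp I dom nu phi psi :
  sat I dom nu (FImp phi psi) <-> (sat I dom nu phi -> sat I dom nu psi).
Proof. by []. Qed.

Lemma sat_FForall I dom nu x phi :
  sat I dom nu (FForall x phi) <-> forall u, dom u -> sat I dom (upd nu x u) phi.
Proof. by []. Qed.

Lemma ffree_FNot phi : ffree (FNot phi) = ffree phi.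
Proof. by []. Qed.

Lemma ffree_FAnd phi psi : ffree (FAnd phi psi) = ffree phi ++ ffree psi.
Proof. by []. Qed.

Lemma ffree_FOr phi psi : ffree (FOr phi psi) = ffree phi ++ ffree psi.
Proof. by []. Qed.

Lemma ffree_FImp phi psi : ffree (FImp phi psi) = ffree phi ++ ffree psi.
Proof. by []. Qed.

Lemma ffree_FExists x phi : ffree (FExists x phi) = [seq y <- ffree phi | y != x].
Proof. by []. Qed.

Lemma ffree_FForall x phi : ffree (FForall x phi) = [seq y <- ffree phi | y != x].
Proof. by []. Qed.

Lemma sat_exists_vars I dom nu xs phi :
  sat I dom nu (exists_vars xs phi) <->
  exists us : seq U, [/\ size us = size xs, (forall u, u \in us -> dom u) &
                 sat I dom (upd_list nu xs us) phi].
Proof.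
elim: xs nu => [|x xs IH] nu /=.
  split => [H|[us [sz _ H]]]; first by exists [::].
  by case: us sz H.
split => [[u du /IH [us [sz dus H]]]|[[|u us] [//= [sz] dus H]]].
  by exists (u :: us); split => /= [|v /predU1P[->|/dus]|]; rewrite ?sz.
exists u; first exact/dus/mem_head.
by apply/IH; exists us; split => // v vus; apply/dus; rewrite inE vus orbT.
Qed.

Lemma sat_forall_vars I dom nu xs phi :
  sat I dom nu (forall_vars xs phi) <->
  (forall us : seq U, size us = size xs -> (forall u, u \in us -> dom u) ->
              sat I dom (upd_list nu xs us) phi).
Proof.
elim: xs nu => [|x xs IH] nu /=.
  by split => [H [] // _ _|H]; last exact: (H [::]).
split => [H [//|u us] /= [sz] dus|H u du].
  have /IH := H u (dus u (mem_head _ _)); apply => // v vus.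
  by apply: dus; rewrite inE vus orbT.
apply/IH => us sz dus; apply: (H (u :: us)); first by rewrite /= sz.
by move=> v /predU1P[->|/dus].
Qed.

Lemma upd_list_iota nu b n us v : size us = n ->
  upd_list nu (iota b n) us v = if b <= v < b + n then nth 0 us (v - b) else nu v.
Proof.
elim: n b nu us => [|n IH] b nu [|u us] //= => [_|[sz]]; first by case: ifP => //; lia.
rewrite IH // /upd addSnnS; case: (ltngtP v b) => [//|bv|->]; last first.
  by rewrite subnn addnS ltnS leq_addr.
by case: ifP => // _; rewrite (_ : v - b = (v - b.+1).+1) //; lia.
Qed.

Lemma map_upd_list_iota nu b us :
  map (upd_list nu (iota b (size us)) us) (iota b (size us)) = us.
Proof.
apply: (@eq_from_nth _ 0) => [|i]; rewrite size_map size_iota // => ius.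
by rewrite (nth_map 0) ?size_iota // nth_iota // upd_list_iota // addKn ifT; lia.
Qed.

Lemma term_vars_TVar xs : flatten (map term_vars (map TVar xs)) = xs.
Proof. by elim: xs => //= x xs ->. Qed.

Lemma map_teval_TVar nu xs : map (teval nu) (map TVar xs) = map nu xs.
Proof. by rewrite -map_comp. Qed.

Lemma mem_map_teval nu v ts :
  v \in flatten (map term_vars ts) -> nu v \in map (teval nu) ts.
Proof.
elim: ts => [//|[w|c] ts IH] /=; last by move/IH; rewrite inE => ->; rewrite orbT.
by rewrite inE => /predU1P[->|/IH]; rewrite inE ?eqxx // => ->; rewrite orbT.
Qed.

Lemma upd_list_iota_lt nu b us v : v < b -> upd_list nu (iota b (size us)) us v = nu v.
Proof. by move=> vb; rewrite upd_list_iota // ifF //; lia. Qed.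

Lemma upd_list_iota_add nu b us i :
  i < size us -> upd_list nu (iota b (size us)) us (b + i) = nth 0 us i.
Proof. by move=> ius; rewrite upd_list_iota // addKn ifT //; lia. Qed.

Lemma map_teval_iota nu b us :
  map (teval (upd_list nu (iota b (size us)) us)) (map TVar (iota b (size us))) = us.
Proof. by rewrite map_teval_TVar map_upd_list_iota. Qed.

Lemma sat_big_and (X : eqType) I dom nu (xs : seq X) (g : X -> formula s) :
  sat I dom nu (big_and (map g xs)) <-> (forall x, x \in xs -> sat I dom nu (g x)).
Proof.
elim: xs => [|x xs IH] //=; rewrite IH.
split => [[H1 H2] y /predU1P[->|/H2] //|H].
by split => [|y yxs]; apply: H; rewrite inE ?eqxx ?yxs ?orbT.
Qed.

Lemma sat_big_or (X : eqType) I dom nu (xs : seq X) (g : X -> formula s) :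
  sat I dom nu (big_or (map g xs)) <-> (exists2 x, x \in xs & sat I dom nu (g x)).
Proof.
elim: xs => [|x xs IH] /=; first by split => // -[].
rewrite IH; split => [[H|[y yxs H]]|[y /predU1P[->|yxs] H]].
- by exists x; rewrite ?mem_head.
- by exists y; rewrite // inE yxs orbT.
- by left.
- by right; exists y.
Qed.

Lemma ffree_exists_vars xs phi v :
  v \in ffree (exists_vars xs phi) -> v \in ffree phi /\ v \notin xs.
Proof.
elim: xs => [|x xs IH] //=; rewrite mem_filter => /andP[vx /IH [H1 H2]].
by rewrite inE negb_or vx.
Qed.

Lemma ffree_forall_vars xs phi v :
  v \in ffree (forall_vars xs phi) -> v \in ffree phi /\ v \notin xs.
Proof.
elim: xs => [|x xs IH] //=; rewrite mem_filter => /andP[vx /IH [H1 H2]].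
by rewrite inE negb_or vx.
Qed.

Lemma ffree_big_and phis : ffree (big_and phis) = flatten (map (@ffree s) phis).
Proof. by elim: phis => //= phi phis ->. Qed.

Lemma ffree_big_or phis : ffree (big_or phis) = flatten (map (@ffree s) phis).
Proof. by elim: phis => //= phi phis ->. Qed.

Lemma fcsts_big_and phis : fcsts (big_and phis) = flatten (map (@fcsts s) phis).
Proof. by elim: phis => //= phi phis ->. Qed.

Lemma fcsts_big_or phis : fcsts (big_or phis) = flatten (map (@fcsts s) phis).
Proof. by elim: phis => //= phi phis ->. Qed.

End DerivedConnectives.

Section ChainSchema.
Variable t : schema.

Definition max_arity : nat := \max_(R : sym t) ar R.
Local Notation M := max_arity.

Lemma ar_le_max_arity (R : sym t) : ar R <= M.
Proof. exact: (leq_bigmax R). Qed.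

Lemma card_unit_gt0 : 0 < #|{: unit}|.
Proof. by rewrite card_unit. Qed.

Definition chain_schema : schema := Schema (fun _ : unit => M + 4) card_unit_gt0.

Definition node_fact (l : seq U) : fact chain_schema :=
  @Tagged _ (tt : sym chain_schema) (fun R => (ar R).-tuple U)
    (insubd (nseq_tuple (M + 4) 0) l).

Lemma node_factK l : size l = M + 4 -> (tagged (node_fact l) : seq U) = l.
Proof. by move=> sz; rewrite /= val_insubd sz eqxx. Qed.

Lemma node_fact_tagged (f : fact chain_schema) : node_fact (tagged f) = f.
Proof.
case: f => [[] x]; congr existT.
by apply: val_inj; rewrite val_insubd size_tuple eqxx.
Qed.

Lemma node_fact_inj l1 l2 : size l1 = M + 4 -> size l2 = M + 4 ->
  node_fact l1 = node_fact l2 -> l1 = l2.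
Proof. by move=> sz1 sz2 E; rewrite -(node_factK sz1) -(node_factK sz2) E. Qed.

Lemma adom_node_fact (I : inst chain_schema) l u :
  size l = M + 4 -> node_fact l \in I -> u \in l -> adom I u.
Proof. by move=> sz lI ul; exists (node_fact l); rewrite ?node_factK. Qed.

Definition node_atom (ts : seq term) : formula chain_schema :=
  @FRel chain_schema tt (insubd (nseq_tuple (M + 4) (TCst 0)) ts).

Lemma sat_node_atom I dom nu ts : size ts = M + 4 ->
  sat I dom nu (node_atom ts) <-> node_fact (map (teval nu) ts) \in I.
Proof.
move=> sz; rewrite /node_atom /=; set f := Tagged _ _.
by rewrite -(node_fact_tagged f) /f /= val_insubd sz eqxx.
Qed.

Definition fact_code (f : fact t) : nat :=
  choice.pickle (enum_rank (tag f) : nat, tagged f : seq U).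

Lemma fact_eq (f : fact t) R (x : (ar R).-tuple U) :
  tag f = R -> (tagged f : seq U) = x -> f = Tagged (fun R => (ar R).-tuple U) x.
Proof. by case: f => R' x' /= eR; subst R' => ex; congr existT; exact: val_inj. Qed.

Lemma fact_code_inj : injective fact_code.
Proof.
move=> f [R x] /(pcan_inj (@choice.pickleK _)) [] /val_inj /enum_rank_inj /= fR fx.
exact: fact_eq.
Qed.

Definition inst_code (D : inst t) : nat := choice.pickle (map fact_code (enum_fset D)).

Lemma inst_code_inj : injective inst_code.
Proof.
by move=> D1 D2 /(pcan_inj (@choice.pickleK _)) /(inj_map fact_code_inj) /val_inj.
Qed.

Definition rel_code (R : sym t) : nat := (enum_rank R).+1.

Definition pad (l : seq U) : seq U := l ++ nseq (M - size l) 0.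

Lemma size_pad l : size l <= M -> size (pad l) = M.
Proof. by rewrite size_cat size_nseq; lia. Qed.

Lemma pad_inj l1 l2 : size l1 = size l2 -> pad l1 = pad l2 -> l1 = l2.
Proof. by move=> sz /(congr1 (take (size l1))); rewrite !take_size_cat ?sz. Qed.

Definition fact_payload (f : fact t) : seq U := rel_code (tag f) :: pad (tagged f).

Lemma size_fact_payload f : size (fact_payload f) = M.+1.
Proof. by rewrite /= size_pad // size_tuple ar_le_max_arity. Qed.

(* Node [j] of the chain of [D] is [c; c + j; next; payload] with [c = inst_code D]:
   the nodes form a cycle through their second and third entries, starting at the
   head [j = 0], whose id is [c] itself. Node [j > 0] carries the [j-1]-th fact of [D];
   the head carries zeros, which match no [fact_payload] since [rel_code] is positive. *)
Definition node_payload (D : inst t) (j : nat) : seq U :=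
  nth (nseq M.+1 0) (nseq M.+1 0 :: map fact_payload (enum_fset D)) j.

Definition next_node (D : inst t) (j : nat) : U :=
  if j < size (enum_fset D) then inst_code D + j.+1 else inst_code D.

Definition node_seq (D : inst t) (j : nat) : seq U :=
  [:: inst_code D, inst_code D + j, next_node D j & node_payload D j].

Definition node (D : inst t) (j : nat) : fact chain_schema := node_fact (node_seq D j).

Definition chain_block (D : inst t) : inst chain_schema :=
  [fset node D j | j in iota 0 (size (enum_fset D)).+1]%fset.

Lemma size_node_payload D j : size (node_payload D j) = M.+1.
Proof.
rewrite /node_payload; set ls := _ :: _.
have [jls|lsj] := ltnP j (size ls); last by rewrite nth_default ?size_nseq.
move: (mem_nth (nseq M.+1 0) jls); rewrite inE => /predU1P[->|/mapP[f _ ->]].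
  by rewrite size_nseq.
exact: size_fact_payload.
Qed.

Lemma size_node_seq D j : size (node_seq D j) = M + 4.
Proof. by rewrite /= size_node_payload; lia. Qed.

Lemma node_payload_mem D j : j < size (enum_fset D) ->
  exists2 f, f \in D & node_payload D j.+1 = fact_payload f.
Proof.
move=> jD; have : node_payload D j.+1 \in map fact_payload (enum_fset D).
  by rewrite /node_payload /= mem_nth // size_map.
by move=> /mapP[f fD ->]; exists f.
Qed.

Lemma node_payload_index D f : f \in D ->
  index f (enum_fset D) < size (enum_fset D) /\
  node_payload D (index f (enum_fset D)).+1 = fact_payload f.
Proof.
move=> fD; rewrite index_mem; split => //.
by rewrite /node_payload /= (nth_map f) ?index_mem // nth_index.
Qed.

Lemma mem_chain_block D j : j <= size (enum_fset D) -> node D j \in chain_block D.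
Proof. by move=> jD; apply/imfsetP; exists j; rewrite // mem_iota; lia. Qed.

Lemma chain_blockP D f :
  f \in chain_block D -> exists2 j, j <= size (enum_fset D) & f = node D j.
Proof. by move=> /imfsetP[j]; rewrite mem_iota => /andP[_ jD] ->; exists j => //; lia. Qed.

Definition closed_chain (I : inst chain_schema) (c : U) : Prop :=
  (exists2 us, size us = M + 2 & node_fact [:: c, c & us] \in I) /\
  (forall x y us, size us = M + 1 -> node_fact [:: c, x, y & us] \in I ->
     exists2 us', size us' = M + 2 & node_fact [:: c, y & us'] \in I).

Definition unique_chain (I : inst chain_schema) (c : U) : Prop :=
  closed_chain I c /\ forall c', closed_chain I c' -> c' = c.

Definition chain_data (I : inst chain_schema) (c : U) (R : sym t) (x : seq U) : Prop :=
  exists e y, node_fact [:: c, e, y, rel_code R & pad x] \in I.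

Lemma closed_chain_adom I c : closed_chain I c -> adom I c.
Proof.
move=> [[us sz cI] _]; apply: adom_node_fact cI (mem_head _ _).
by rewrite /= sz; lia.
Qed.

Lemma node_seq_tail D j : exists2 us, size us = M + 2 &
  node_seq D j = [:: inst_code D, inst_code D + j & us].
Proof. by exists (drop 2 (node_seq D j)); rewrite // size_drop size_node_seq; lia. Qed.

Lemma closed_chain_block D : closed_chain (chain_block D) (inst_code D).
Proof.
have head_mem : exists2 us, size us = M + 2 &
    node_fact [:: inst_code D, inst_code D & us] \in chain_block D.
  have [us sz E] := node_seq_tail D 0.
  by exists us; rewrite // -[X in [:: _, X & _]]addn0 -E mem_chain_block.
split => // x y us sz /chain_blockP[j jD xyD].
have [_ -> _] : [:: inst_code D, x, y & us] = node_seq D j.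
  by apply: node_fact_inj xyD; rewrite ?size_node_seq //= sz; lia.
rewrite /next_node; case: ifP => // jD'.
have [us' sz' E'] := node_seq_tail D j.+1.
by exists us'; rewrite // -E' mem_chain_block.
Qed.

Lemma closed_chain_block_code D c : closed_chain (chain_block D) c -> c = inst_code D.
Proof.
move=> [[us sz /chain_blockP[j _ ccD]] _].
suff : [:: c, c & us] = node_seq D j by case=> ->.
by apply: node_fact_inj ccD; rewrite ?size_node_seq //= sz; lia.
Qed.

Lemma unique_chain_block D : unique_chain (chain_block D) (inst_code D).
Proof. by split => [|c]; [exact: closed_chain_block|exact: closed_chain_block_code]. Qed.

Variable DD : set (inst t).

Definition chain_fact (f : fact chain_schema) : Prop :=
  exists D j, [/\ DD D, j <= size (enum_fset D) & f = node D j].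

Definition chain_inst (I : inst chain_schema) : Prop := forall f, f \in I -> chain_fact f.

Lemma chain_block_chain_inst D : DD D -> chain_inst (chain_block D).
Proof. by move=> DD_D f /chain_blockP[j jD ->]; exists D, j. Qed.

Lemma chain_inst_node I c x us : chain_inst I -> size us = M + 2 ->
    node_fact [:: c, x & us] \in I ->
  exists D j, [/\ DD D, j <= size (enum_fset D), c = inst_code D, x = inst_code D + j
                & node_fact [:: c, x & us] = node D j].
Proof.
move=> chI sz /chI[D [j [DD_D jD E]]]; exists D, j.
suff [ec ex _] : [:: c, x & us] = node_seq D j by split.
by apply: node_fact_inj E; rewrite ?size_node_seq //= sz; lia.
Qed.

Lemma closed_chain_complete I c : chain_inst I -> closed_chain I c ->
  exists D, [/\ DD D, c = inst_code D & forall j, j <= size (enum_fset D) -> node D j \in I].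
Proof.
move=> chI [[us sz ccI] closedI].
have [D [j [DD_D _ ec ej head]]] := chain_inst_node chI sz ccI.
exists D; split => //; subst c; have j0 : j = 0 by lia.
elim=> [_|k IH kD]; first by rewrite -j0 -head.
have sz_pl : size (node_payload D k) = M + 1 by rewrite size_node_payload addn1.
have [us' sz'] := closedI _ _ _ sz_pl (IH (ltnW kD)); rewrite /next_node kD => nextI.
have [D' [k' [_ _ /inst_code_inj <- ek E]]] := chain_inst_node chI sz' nextI.
have -> : k.+1 = k' by lia.
by rewrite -E.
Qed.

Lemma chain_data_complete I D R (x : (ar R).-tuple U) : chain_inst I ->
    (forall j, j <= size (enum_fset D) -> node D j \in I) ->
  chain_data I (inst_code D) R x <-> Tagged (fun R => (ar R).-tuple U) x \in D.
Proof.
move=> chI DI; split => [[e [y dataI]]|xD].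
  have sz : size [:: y, rel_code R & pad x] = M + 2.
    by rewrite /= size_pad ?size_tuple ?ar_le_max_arity //; lia.
  have [D' [k [_ kD /inst_code_inj eD _ E]]] := chain_inst_node chI sz dataI; subst D'.
  have : rel_code R :: pad x = node_payload D k.
    suff [_ _ ->] : [:: inst_code D, e, y, rel_code R & pad x] = node_seq D k by [].
    apply: node_fact_inj E; rewrite ?size_node_seq //=.
    by rewrite size_pad ?size_tuple ?ar_le_max_arity //; lia.
  case: k kD {E} => [//|k kD]; have [g gD ->] := node_payload_mem kD.
  case=> /val_inj /enum_rank_inj Rg xg.
  have gx : (tagged g : seq U) = x by apply: pad_inj; rewrite ?size_tuple ?Rg.
  by rewrite -(fact_eq (esym Rg) gx).
have [kD Ek] := node_payload_index xD.
exists (inst_code D + (index (Tagged _ x) (enum_fset D)).+1).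
exists (next_node D (index (Tagged (fun R => (ar R).-tuple U) x) (enum_fset D)).+1).
by have := DI _ kD; rewrite /node /node_seq Ek.
Qed.

(* Variables [0 .. ar R - 1] hold the output tuple and [M] (and [M.+1]) a chain code;
   the entries of quantified nodes use fresh blocks of variables starting at [b]. *)
Definition node_with_id_formula (cv xv b : nat) : formula chain_schema :=
  exists_vars (iota b (M + 2)) (node_atom [:: TVar cv, TVar xv & map TVar (iota b (M + 2))]).

Definition closure_formula (cv b : nat) : formula chain_schema :=
  forall_vars (iota b (M + 3)) (FImp (node_atom (TVar cv :: map TVar (iota b (M + 3))))
    (node_with_id_formula cv b.+1 (b + M + 3))).

Definition closed_chain_formula (cv b : nat) : formula chain_schema :=
  FAnd (node_with_id_formula cv cv b) (closure_formula cv b).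

Definition unique_chain_formula : formula chain_schema :=
  FAnd (closed_chain_formula M M.+2)
    (FForall M.+1 (FImp (closed_chain_formula M.+1 M.+2)
                        (FEq chain_schema (TVar M.+1) (TVar M)))).

Definition data_formula (R : sym t) : formula chain_schema :=
  exists_vars (iota M.+2 2) (node_atom [:: TVar M, TVar M.+2, TVar M.+3,
    TCst (rel_code R) & map TVar (iota 0 (ar R)) ++ nseq (M - ar R) (TCst 0)]).

Section FormulaSemantics.
Variables (I : inst chain_schema) (dom : set U).
Hypothesis adom_dom : forall u, adom I u -> dom u.

Lemma sat_exists_node nu b n ts : size ts = M + 4 ->
    {subset iota b n <= flatten (map term_vars ts)} ->
  sat I dom nu (exists_vars (iota b n) (node_atom ts)) <->
  exists2 us, size us = n & node_fact (map (teval (upd_list nu (iota b n) us)) ts) \in I.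
Proof.
move=> sz vars; rewrite sat_exists_vars size_iota.
split => [[us [usn _]]|[us usn usI]]; first by rewrite sat_node_atom // => usI; exists us.
exists us; split; rewrite ?sat_node_atom // => u.
rewrite -{1}(map_upd_list_iota nu b us) usn => /mapP[v /vars vts ->].
by apply/adom_dom/(adom_node_fact _ usI); rewrite ?size_map ?mem_map_teval.
Qed.

Lemma sat_node_with_id nu cv xv b : cv < b -> xv < b ->
  sat I dom nu (node_with_id_formula cv xv b) <->
  exists2 us, size us = M + 2 & node_fact [:: nu cv, nu xv & us] \in I.
Proof.
move=> cvb xvb; rewrite sat_exists_node => [|/=|v]; last 2 first.
- by rewrite size_map size_iota; lia.
- by rewrite /= term_vars_TVar !inE => ->; rewrite !orbT.
split=> -[us sz usI]; exists us => //; move: usI; rewrite -sz /=.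
  by rewrite !upd_list_iota_lt // map_teval_iota.
by rewrite !upd_list_iota_lt // map_teval_iota.
Qed.

Lemma sat_closure nu cv b : cv < b ->
  sat I dom nu (closure_formula cv b) <->
  (forall x y us, size us = M + 1 -> node_fact [:: nu cv, x, y & us] \in I ->
     exists2 us', size us' = M + 2 & node_fact [:: nu cv, y & us'] \in I).
Proof.
move=> cvb; rewrite sat_forall_vars size_iota.
have sat_atom ws : size ws = M + 3 ->
    sat I dom (upd_list nu (iota b (M + 3)) ws)
      (node_atom (TVar cv :: map TVar (iota b (M + 3)))) <-> node_fact (nu cv :: ws) \in I.
  move=> sz; rewrite sat_node_atom /=; last by rewrite size_map size_iota; lia.
  by rewrite -sz upd_list_iota_lt // map_teval_iota.
have sat_next vs : size vs = M + 3 ->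
    sat I dom (upd_list nu (iota b (M + 3)) vs) (node_with_id_formula cv b.+1 (b + M + 3))
    <-> exists2 us', size us' = M + 2 & node_fact [:: nu cv, nth 0 vs 1 & us'] \in I.
  move=> sz; rewrite sat_node_with_id; try lia.
  by rewrite -sz upd_list_iota_lt // -[b.+1]addn1 upd_list_iota_add // sz; lia.
split => [H x y us sz xyI|H ws sz _ /(sat_atom _ sz) wsI].
  have szw : size [:: x, y & us] = M + 3 by rewrite /= sz; lia.
  apply/(sat_next _ szw)/(H _ szw)/(sat_atom _ szw) => // u uxy.
  apply/adom_dom/(adom_node_fact _ xyI); last exact: mem_behead.
  by rewrite /= sz; lia.
apply/(sat_next _ sz); case: ws sz wsI => [|x [|y us]] /= sz wsI; try lia.
by apply: (H _ _ _ _ wsI); lia.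
Qed.

Lemma sat_closed_chain nu cv b : cv < b ->
  sat I dom nu (closed_chain_formula cv b) <-> closed_chain I (nu cv).
Proof. by move=> cvb; rewrite sat_FAnd sat_node_with_id // sat_closure. Qed.

Lemma sat_unique_chain nu :
  sat I dom nu unique_chain_formula <-> unique_chain I (nu M).
Proof.
rewrite sat_FAnd sat_closed_chain ?sat_FForall; last lia.
apply: and_iff_compat_l; split => [H c cc|H c _].
  have := H c (adom_dom (closed_chain_adom cc)).
  rewrite sat_FImp sat_closed_chain /upd /= ?eqxx; last lia.
  by rewrite ifF; [apply|lia].
rewrite sat_FImp sat_closed_chain /upd /= ?eqxx; last lia.
by rewrite ifF; [apply: H|lia].
Qed.

Lemma sat_data nu R :
  sat I dom nu (data_formula R) <-> chain_data I (nu M) R (map nu (iota 0 (ar R))).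
Proof.
have arM := ar_le_max_arity R.
rewrite sat_exists_node //; last 2 first.
- by rewrite /= size_cat size_map size_iota size_nseq; lia.
- by move=> v /=; rewrite !inE => /orP[]/eqP->; rewrite eqxx ?orbT.
set nu' := upd_list nu _.
have nu'E e y :
  nu' [:: e; y] =1 fun v => if v == M.+3 then y else if v == M.+2 then e else nu v by [].
have eval e y : map (teval (nu' [:: e; y])) [:: TVar M, TVar M.+2, TVar M.+3, TCst (rel_code R)
    & map TVar (iota 0 (ar R)) ++ nseq (M - ar R) (TCst 0)] =
    [:: nu M, e, y, rel_code R & pad (map nu (iota 0 (ar R)))].
  rewrite /= !nu'E /= !eqxx !ifF; try lia.
  rewrite map_cat map_teval_TVar map_nseq /pad size_map size_iota.
  congr [:: _, _, _, _ & _ ++ _].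
  by apply/eq_in_map => i; rewrite mem_iota nu'E => /andP[_ iR]; rewrite !ifF //; lia.
split => [[[|e [|y []]] // _ eyI]|[e [y eyI]]]; first by exists e, y; rewrite -eval.
by exists [:: e; y]; rewrite ?eval.
Qed.

End FormulaSemantics.

Variable D0 : inst t.

Definition const_formula (R : sym t) : formula chain_schema :=
  big_or [seq big_and [seq FEq chain_schema (TVar i) (TCst (nth 0 (tval (tagged f)) i))
                       | i <- iota 0 (ar R)]
         | f <- [seq f <- enum_fset D0 | tag f == R]].

Definition decode_formula (R : sym t) : formula chain_schema :=
  FOr (FExists M (FAnd unique_chain_formula (data_formula R)))
      (FAnd (FNot (FExists M unique_chain_formula)) (const_formula R)).

Lemma sat_const I dom R (x : (ar R).-tuple U) :
  sat I dom (tuple_asg x) (const_formula R) <-> Tagged (fun R => (ar R).-tuple U) x \in D0.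
Proof.
rewrite sat_big_or; split => [[f]|xD0]; last first.
  exists (Tagged _ x); first by rewrite mem_filter eqxx.
  by apply/sat_big_and.
rewrite mem_filter => /andP[/eqP fR fD0] /sat_big_and eqs; rewrite -(fact_eq fR) //.
apply: (@eq_from_nth _ 0) => [|i]; rewrite !size_tuple ?fR // => iR.
by symmetry; apply: (eqs i); rewrite mem_iota add0n -fR iR.
Qed.

Lemma map_upd_tuple_asg (R : sym t) (x : (ar R).-tuple U) c :
  map (upd (tuple_asg x) M c) (iota 0 (ar R)) = x.
Proof.
apply: (@eq_from_nth _ 0) => [|i]; rewrite size_map size_iota ?size_tuple // => iR.
rewrite (nth_map 0) ?size_iota // nth_iota // /upd ifF //.
by have := ar_le_max_arity R; lia.
Qed.

Lemma sat_decode I dom R (x : (ar R).-tuple U) : (forall u, adom I u -> dom u) ->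
  sat I dom (tuple_asg x) (decode_formula R) <->
  (exists2 c, unique_chain I c & chain_data I c R x) \/
  (~ (exists c, unique_chain I c) /\ Tagged (fun R => (ar R).-tuple U) x \in D0).
Proof.
move=> adom_dom.
have uniqE c : sat I dom (upd (tuple_asg x) M c) unique_chain_formula <-> unique_chain I c.
  by rewrite sat_unique_chain // /upd eqxx.
have dataE c : sat I dom (upd (tuple_asg x) M c) (data_formula R) <-> chain_data I c R x.
  by rewrite sat_data // map_upd_tuple_asg /upd eqxx.
have someE : sat I dom (tuple_asg x) (FExists M unique_chain_formula) <->
    exists c, unique_chain I c.
  split => [[c _ /uniqE]|[c cI]]; first by exists c.
  by exists c; [exact/adom_dom/closed_chain_adom/cI.1|exact/uniqE].
rewrite sat_FOr sat_FAnd sat_FNot someE sat_const; apply: or_iff_compat_r.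
split => [[c _ [/uniqE cI /dataE dI]]|[c cI dI]]; first by exists c.
by exists c; [exact/adom_dom/closed_chain_adom/cI.1|split; [exact/uniqE|exact/dataE]].
Qed.

Lemma ffree_node_atom ts :
  size ts = M + 4 -> ffree (node_atom ts) = flatten (map term_vars ts).
Proof. by move=> sz; rewrite /node_atom /= val_insubd sz eqxx. Qed.

Lemma ffree_node_with_id cv xv b v :
  v \in ffree (node_with_id_formula cv xv b) -> (v == cv) || (v == xv).
Proof.
rewrite /node_with_id_formula => /ffree_exists_vars[]; rewrite ffree_node_atom /=; last first.
  by rewrite size_map size_iota; lia.
by rewrite term_vars_TVar !inE => /or3P[-> | -> | ->]; rewrite ?orbT.
Qed.

Lemma ffree_closed_chain cv b v : cv < b -> v \in ffree (closed_chain_formula cv b) -> v = cv.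
Proof.
move=> cvb; rewrite ffree_FAnd mem_cat => /orP[/ffree_node_with_id|].
  by rewrite orbb => /eqP.
rewrite /closure_formula => /ffree_forall_vars[]; rewrite ffree_FImp mem_cat.
rewrite ffree_node_atom /=; last by rewrite size_map size_iota; lia.
rewrite term_vars_TVar inE => /orP[/orP[/eqP //|-> //]|/ffree_node_with_id/orP[/eqP //|/eqP ->]].
by rewrite mem_iota; lia.
Qed.

Lemma ffree_unique_chain v : v \in ffree unique_chain_formula -> v = M.
Proof.
rewrite ffree_FAnd ffree_FForall ffree_FImp mem_cat mem_filter.
case/orP => [/ffree_closed_chain -> //|/andP[vM]].
rewrite mem_cat => /orP[/ffree_closed_chain vM'|]; first by rewrite vM' ?eqxx in vM.
by rewrite !inE (negPf vM) => /eqP.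
Qed.

Lemma ffree_data R v : v \in ffree (data_formula R) -> (v == M) || (v < ar R).
Proof.
rewrite /data_formula => /ffree_exists_vars[]; rewrite ffree_node_atom /=; last first.
  by rewrite size_cat size_map size_iota size_nseq; have := ar_le_max_arity R; lia.
rewrite map_cat flatten_cat term_vars_TVar (_ : flatten _ = [::]) ?cats0; last first.
  by elim: (M - ar R).
by rewrite !inE mem_iota => /or4P[-> //|/eqP->|/eqP->|/andP[_ ->]]; rewrite ?orbT ?eqxx //; lia.
Qed.

Lemma ffree_const R v : v \in ffree (const_formula R) -> v < ar R.
Proof.
rewrite ffree_big_or -map_comp => /flatten_mapP[f _]; rewrite /= ffree_big_and -map_comp.
move=> /flatten_mapP[i].
by rewrite mem_iota => /andP[_ iR] /=; rewrite inE => /eqP ->.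
Qed.

Lemma decode_formula_free R : all (fun v => v < ar R) (ffree (decode_formula R)).
Proof.
apply/allP => v; rewrite ffree_FOr !ffree_FAnd ffree_FNot !ffree_FExists ffree_FAnd.
rewrite !mem_cat !mem_filter mem_cat.
case/or3P => [/andP[vM /orP[/ffree_unique_chain|/ffree_data]]|/andP[vM /ffree_unique_chain]|].
- by move=> vM'; rewrite vM' eqxx in vM.
- by rewrite (negPf vM).
- by move=> vM'; rewrite vM' eqxx in vM.
- exact: ffree_const.
Qed.

Definition decode_view : view chain_schema t := View decode_formula_free.

Lemma const_formula_csts (f : fact t) u :
  f \in D0 -> u \in (tagged f : seq U) -> u \in fcsts (const_formula (tag f)).
Proof.
move=> fD0 uf; rewrite fcsts_big_or -map_comp; apply/flatten_mapP; exists f.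
  by rewrite mem_filter eqxx.
rewrite /= fcsts_big_and -map_comp; apply/flatten_mapP; exists (index u (tagged f : seq U)).
  by rewrite mem_iota; move: uf; rewrite -index_mem size_tuple.
by rewrite /= nth_index // inE.
Qed.

Lemma models_decode I R (x : (ar R).-tuple U) :
  models I (vformula decode_view R) x <->
  (exists2 c, unique_chain I c & chain_data I c R x) \/
  (~ (exists c, unique_chain I c) /\ Tagged (fun R => (ar R).-tuple U) x \in D0).
Proof. by apply: sat_decode => u; left. Qed.

Lemma view_eval_chain I D : chain_inst I -> unique_chain I (inst_code D) ->
  (forall j, j <= size (enum_fset D) -> node D j \in I) -> view_eval decode_view I D.
Proof.
move=> chI uI DI [R x] /=; rewrite models_decode.
have -> : (exists2 c, unique_chain I c & chain_data I c R x) \/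
    (~ (exists c, unique_chain I c) /\ Tagged (fun R => (ar R).-tuple U) x \in D0) <->
    chain_data I (inst_code D) R x.
  split => [[[c cI]|[noc _]]|dI]; last by left; exists (inst_code D).
    by rewrite -(uI.2 c cI.1).
  by case: noc; exists (inst_code D).
rewrite (chain_data_complete _ chI DI); split => [xD|[] //]; split => // u ux; left.
have [e [y dI]] := (chain_data_complete _ chI DI).2 xD.
apply: adom_node_fact dI _; first by rewrite /= size_pad ?size_tuple ?ar_le_max_arity //; lia.
by rewrite !inE mem_cat ux !orbT.
Qed.

Lemma view_eval_default I : ~ (exists c, unique_chain I c) -> view_eval decode_view I D0.
Proof.
move=> noc [R x] /=; rewrite models_decode.
have -> : (exists2 c, unique_chain I c & chain_data I c R x) \/
    (~ (exists c, unique_chain I c) /\ Tagged (fun R => (ar R).-tuple U) x \in D0) <->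
    Tagged (fun R => (ar R).-tuple U) x \in D0.
  by split => [[[c cI _]|[]] //|xD0]; [case: noc; exists c|right].
split => [xD0|[] //]; split => // u ux; right.
by rewrite /= !mem_cat (const_formula_csts xD0 ux) !orbT.
Qed.

Hypothesis DD_D0 : DD D0.

Lemma decode_view_total I : chain_inst I -> exists2 D, DD D & view_eval decode_view I D.
Proof.
move=> chI; have [[c cI]|noc] := pselect (exists c, unique_chain I c); last first.
  by exists D0; last exact: view_eval_default.
have [D [DD_D cD DI]] := closed_chain_complete chI cI.1.
by exists D; last by apply: view_eval_chain; rewrite -?cD.
Qed.

Local Open Scope ring_scope.

Definition node_code (f : fact chain_schema) : nat := choice.pickle (tagged f : seq U).

Lemma node_code_inj : injective node_code.
Proof.
move=> f g /(pcan_inj (@choice.pickleK _)) fg.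
by rewrite -(node_fact_tagged f) -(node_fact_tagged g) fg.
Qed.

(* Chain facts get pairwise distinct weights [2^-k], [k >= 2], so that every
   [\prod (1 + r f)] stays below 2 and the product measure is normalizable. *)
Definition chain_weight (f : fact chain_schema) : real :=
  if pselect (chain_fact f) is left _ then 2^-1 ^+ (node_code f).+2 else 0.

Lemma chain_weight_ge0 f : 0 <= chain_weight f.
Proof. by rewrite /chain_weight; case: pselect => // _; rewrite exprn_ge0 // invr_ge0. Qed.

Lemma prod_chain_weight_le2 bs : uniq bs -> \prod_(b <- bs) (1 + chain_weight b) <= 2.
Proof.
move=> ubs; have uks : uniq (map node_code bs) by rewrite (map_inj_uniq node_code_inj).
apply: le_trans (prod_halfpow_le _ uks).
rewrite big_map ler_prod // => b _; rewrite lerD2l addr_ge0 ?chain_weight_ge0 //=.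
by rewrite /chain_weight; case: pselect => // _; rewrite exprn_ge0 // invr_ge0.
Qed.

Lemma weight_gt0_chain_inst I : 0 < weight chain_weight I -> chain_inst I.
Proof.
move=> wI f fI; apply: contrapT => nf; move: wI; rewrite lt_def => /andP[/negP[]].
by rewrite /weight (big_rem f) //= /chain_weight; case: pselect => // _; rewrite mul0r.
Qed.

Lemma weight_chain_block_gt0 D : DD D -> 0 < weight chain_weight (chain_block D).
Proof.
move=> DD_D; rewrite /weight big_seq prodr_gt0 // => f /(chain_block_chain_inst DD_D) cf.
by rewrite /chain_weight; case: pselect => // _; rewrite exprn_gt0 // invr_gt0.
Qed.

End ChainSchema.

Theorem lemma6p6 (t : schema) (DD : set (inst t)) :
  DD !=set0 -> exists Q : pdb t, in_FO_TI Q /\ worlds Q = DD.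
Proof.
move=> [D0 DD_D0].
pose P := product_pdb (chain_weight_ge0 DD) (prod_chain_weight_le2 DD).
pose V := decode_view D0.
have V_total I : Defs.space P I -> exists D', view_eval V I D'.
  by move=> /weight_gt0_chain_inst/(decode_view_total DD_D0)[D' _ VD']; exists D'.
exists (image_pdb V_total); split.
  by exists (chain_schema t), P, V; split; [exact: product_pdb_TI|exact: image_pdbP].
apply/seteqP; split => D'; rewrite /worlds /= (image_pdbP V_total).2.
  move=> /Prob_gt0_inhabited[I VD' /weight_gt0_chain_inst chI].
  have [D DD_D VD] := decode_view_total DD_D0 chI.
  by rewrite (view_eval_functional VD' VD).
move=> DD_D'; apply: (Prob_product_pdb_gt0 _ _ _ (weight_chain_block_gt0 DD_D')).
apply: view_eval_chain.
- exact: chain_block_chain_inst.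
- exact: unique_chain_block.
- exact: mem_chain_block.
Qed.
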